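(* Let $X\in\mathbb{R}^{m\times n}_+$, $W\in\mathbb{R}^{m\times r}$ and $H\in\mathbb{R}^{r\times n}_+$ be such that $X=WH$ satisfies the facet-based conditions (FBC) for some integer $s$. Then every facet of $\operatorname{conv}(W)$ is a facet of $\operatorname{conv}(X)$.
   Context: For a matrix $M$, $\operatorname{conv}(M)$ denotes the convex hull of its columns. A facet of a polytope is a face of dimension one less than the dimension of the polytope. The unit simplex is $\Delta^r=\{x\in\mathbb{R}^r: x\ge 0,\ \sum_i x_i=1\}$. Facet-based conditions (FBC) with parameter $s$ for $X=WH$, where $d=\operatorname{rank}(X)$: (a) no column of $W$ lies in the convex hull of the other columns of $W$ (so $\operatorname{conv}(W)$ is a polytope whose $r$ vertices are the columns of $W$); (b) $H(:,j)\in\Delta^r$ for all $j=1,\dots,n$; (c) each facet of $\operatorname{conv}(W)$ contains at least $s\ge d$ distinct columns of $X$, and among them at least $d-1$ generate that facet (i.e., the convex hull of these $s$ columns has dimension $d-2$); (d) every facet of $\operatorname{conv}(X)$ which is not a facet of $\operatorname{conv}(W)$ contains strictly fewer than $s$ distinct columns of $X$. *)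

From HB Require Import structures.
From mathcomp Require Import all_boot all_order all_algebra.
Set Implicit Arguments. Unset Strict Implicit. Unset Printing Implicit Defensive.
Import Order.TTheory GRing.Theory Num.Theory.
Local Open Scope ring_scope.

Section Polytopes.
Variable R : realFieldType.

Definition conv_sub m k (M : 'M[R]_(m, k)) (J : {set 'I_k}) (x : 'cV[R]_m) : Prop :=
  exists lam : 'cV[R]_k,
    [/\ forall i, 0 <= lam i 0,
        forall i, i \notin J -> lam i 0 = 0,
        \sum_i lam i 0 = 1
      & x = M *m lam].

Definition conv m k (M : 'M[R]_(m, k)) (x : 'cV[R]_m) : Prop := conv_sub M setT x.

Definition aff_indep m k (p : 'I_k.+1 -> 'cV[R]_m) : bool :=
  row_free (\matrix_(i < k) (p (lift ord0 i) - p ord0)^T).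

Definition aff_dim_ge m (S : 'cV[R]_m -> Prop) (k : nat) : Prop :=
  exists p : 'I_k.+1 -> 'cV[R]_m, (forall i, S (p i)) /\ aff_indep p.

(* S has (affine) dimension d; the empty set has dimension -1 *)
Definition has_dim m (S : 'cV[R]_m -> Prop) (d : int) : Prop :=
  match d with
  | Posz k => aff_dim_ge S k /\ ~ aff_dim_ge S k.+1
  | Negz 0 => forall x, ~ S x
  | _ => False
  end.

Definition is_face m k (M : 'M[R]_(m, k)) (F : 'cV[R]_m -> Prop) : Prop :=
  exists (a : 'cV[R]_m) (b : R),
    (forall x, conv M x -> (a^T *m x) 0 0 <= b) /\
    (forall x, F x <-> (conv M x /\ (a^T *m x) 0 0 = b)).

Definition is_facet m k (M : 'M[R]_(m, k)) (F : 'cV[R]_m -> Prop) : Prop :=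
  is_face M F /\ exists d : int, has_dim (conv M) d /\ has_dim F (d - 1).

Definition distinct_cols_in m n (X : 'M[R]_(m, n)) (J : {set 'I_n})
    (F : 'cV[R]_m -> Prop) : Prop :=
  {in J &, injective (fun j => col j X)} /\ (forall j, j \in J -> F (col j X)).

Definition FBC m n r (X : 'M[R]_(m, n)) (W : 'M[R]_(m, r)) (H : 'M[R]_(r, n))
    (s : nat) : Prop :=
  let d := \rank X in
  [/\ forall k : 'I_r, ~ conv_sub W [set~ k] (col k W),
      (forall i j, 0 <= H i j) /\ (forall j, \sum_i H i j = 1),
      (d <= s)%N /\
         (forall F, is_facet W F ->
            exists J : {set 'I_n}, [/\ (s <= #|J|)%N, distinct_cols_in X J F
                                     & has_dim (conv_sub X J) (d%:Z - 2)])
    & forall G, is_facet X G -> ~ is_facet W G ->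
        forall J : {set 'I_n}, distinct_cols_in X J G -> (#|J| < s)%N].

End Polytopes.

From HB Require Import structures.
From mathcomp Require Import all_boot all_order all_algebra.
From mathcomp Require Import lra zify.
From Stdlib Require Import Classical.
Import Order.TTheory GRing.Theory Num.Theory.
Local Open Scope ring_scope.

(* Since the columns of H lie in the unit simplex, conv X is contained in
   conv W.  Let F = {x | a x = b} be a facet of conv W; by FBC (c) the face
   G = conv X ∩ F contains a (d-2)-dimensional set of columns of X, while
   dim conv X <= rank X = d.  Rotating a supporting hyperplane of conv X about a
   face until it meets new columns shows that every proper face lies in a facet
   avoiding any given point of conv X off the face, and that a face of
   codimension 2 lies in two facets.  By FBC (d), a facet of conv X containing
   conv X ∩ F' for a facet F' of conv W is itself a facet of conv W.
   - conv X is not inside F: otherwise a facet of conv W missing a column of X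
     produces a facet of conv X that is a facet of conv W, which forces
     dim conv X = dim F + 1.
   - Hence G is a proper face of conv X of dimension d-2 or more.  If it had
     codimension 2, the two facets of conv X through it would be facets of
     conv W, and together with F they would be three facets of conv W through
     the ridge G, which is impossible.  So G is a facet of conv X, hence of
     conv W, and G = F. *)

Set Implicit Arguments. Unset Strict Implicit. Unset Printing Implicit Defensive.

Section LinearFunctionals.
Variables (R : realFieldType) (m : nat).
Implicit Types (a c x y : 'cV[R]_m).

Definition dot a x : R := (a^T *m x) 0 0.

Lemma dotE a x : dot a x = \sum_i a i 0 * x i 0.
Proof. by rewrite /dot !mxE; apply: eq_bigr => i _; rewrite mxE. Qed.

Lemma dotBr a x y : dot a (x - y) = dot a x - dot a y.
Proof. by rewrite /dot mulmxBr [LHS]mxE [X in _ + X]mxE. Qed.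

Lemma dotZr a k x : dot a (k *: x) = k * dot a x.
Proof. by rewrite /dot -scalemxAr mxE. Qed.

Lemma dotDl a c x : dot (a + c) x = dot a x + dot c x.
Proof. by rewrite /dot linearD /= mulmxDl mxE. Qed.

Lemma dotZl a k x : dot (k *: a) x = k * dot a x.
Proof. by rewrite /dot linearZ /= -scalemxAl mxE. Qed.

Lemma dotNl a x : dot (- a) x = - dot a x.
Proof. by rewrite /dot linearN /= mulNmx mxE. Qed.

Lemma dot0l x : dot 0 x = 0.
Proof. by rewrite /dot linear0 mul0mx mxE. Qed.

Lemma dot_sumr (I : finType) a (f : I -> 'cV[R]_m) :
  dot a (\sum_i f i) = \sum_i dot a (f i).
Proof. by rewrite /dot mulmx_sumr summxE. Qed.

Lemma trmx_mul_dot a x : (x^T *m a) 0 0 = dot a x.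
Proof. by rewrite /dot !mxE; apply: eq_bigr => i _; rewrite !mxE mulrC. Qed.

Lemma dot_mulmx N (M : 'M[R]_(m, N)) a (lam : 'cV[R]_N) :
  dot a (M *m lam) = \sum_j lam j 0 * dot a (col j M).
Proof.
have -> : M *m lam = \sum_j lam j 0 *: col j M.
  apply/matrixP => i k; rewrite (ord1 k) !mxE summxE.
  by apply: eq_bigr => j _; rewrite !mxE mulrC.
by rewrite dot_sumr; apply: eq_bigr => j _; rewrite dotZr.
Qed.

End LinearFunctionals.

Section ConvexHull.
Variables (R : realFieldType) (m N : nat) (M : 'M[R]_(m, N)).
Implicit Types (a c x y : 'cV[R]_m) (b g : R).

Definition valid a b := forall j, dot a (col j M) <= b.

Definition face_of a b x := conv M x /\ dot a x = b.

Lemma conv_sub_col (J : {set 'I_N}) j : j \in J -> conv_sub M J (col j M).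
Proof.
move=> hj; exists (delta_mx j 0); split.
- by move=> i; rewrite mxE ler0n.
- by move=> i hi; rewrite mxE; case: eqP => // ?; subst i; move: hi; rewrite hj.
- by rewrite (bigD1 j) //= mxE !eqxx big1 ?addr0 // => i /negbTE hi; rewrite mxE hi.
- by rewrite colE.
Qed.

Lemma conv_col j : conv M (col j M).
Proof. exact/conv_sub_col/in_setT. Qed.

Lemma valid_conv a b x : valid a b -> conv M x -> dot a x <= b.
Proof.
move=> hv [lam [h0 _ h1 ->]]; rewrite dot_mulmx.
apply: (@le_trans _ _ (\sum_j lam j 0 * b)).
  by apply: ler_sum => j _; apply: ler_wpM2l.
by rewrite -big_distrl /= h1 mul1r.
Qed.

Lemma valid_face a b : valid a b -> is_face M (face_of a b).
Proof. by move=> hv; exists a, b; split => // x; apply: valid_conv. Qed.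

Lemma face_repr F : is_face M F ->
  exists a b, valid a b /\ forall x, F x <-> face_of a b x.
Proof. by case=> a [b [hv hF]]; exists a, b; split => // j; apply/hv/conv_col. Qed.

Lemma face_of_lt a b x : valid a b -> conv M x -> ~ face_of a b x -> dot a x < b.
Proof.
by move=> hv hx hn; rewrite lt_neqAle valid_conv // andbT; apply/eqP => h; apply: hn.
Qed.

(* Weights of a convex combination vanish off the face, so what holds on the
   tight columns holds on the whole face. *)
Lemma face_of_sub a b c g :
  valid a b -> (forall j, dot a (col j M) = b -> dot c (col j M) = g) ->
  forall x, face_of a b x -> face_of c g x.
Proof.
move=> hv ht x [hx hxa]; split => //; case: hx hxa => lam [h0 _ h1 ->].
rewrite !dot_mulmx => hx.
have hz j : lam j 0 * (b - dot a (col j M)) = 0.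
  apply: (@psumr_eq0P _ _ predT (fun j => lam j 0 * (b - dot a (col j M)))) => //.
    by move=> i _; apply: mulr_ge0 => //; rewrite subr_ge0.
  under eq_bigr do rewrite mulrBr.
  by rewrite sumrB -big_distrl /= h1 mul1r hx subrr.
rewrite (eq_bigr (fun j => lam j 0 * g)); first by rewrite -big_distrl /= h1 mul1r.
move=> j _; have := hz j; have [->|hl] := eqVneq (lam j 0) 0; first by rewrite !mul0r.
by move/eqP; rewrite mulf_eq0 (negbTE hl) /= subr_eq0 => /eqP/esym/ht ->.
Qed.

Lemma conv_dot_const c g x :
  (forall j, dot c (col j M) = g) -> conv M x -> dot c x = g.
Proof.
move=> h hx; have hv : valid 0 0 by move=> j; rewrite dot0l.
by have [] := @face_of_sub 0 0 c g hv (fun j _ => h j) x (conj hx (dot0l x)).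
Qed.

Lemma exists_col_lt a b q : valid a b -> conv M q -> dot a q < b ->
  exists j, dot a (col j M) < b.
Proof.
move=> hv hq hqb; apply: NNPP => hn; suff hall j : dot a (col j M) = b.
  by move: hqb; rewrite (conv_dot_const hall hq) ltxx.
by apply/eqP; rewrite eq_le hv leNgt; apply/negP => h; apply: hn; exists j.
Qed.

Lemma conv_sub_face (J : {set 'I_N}) c g y :
  (forall j, j \in J -> dot c (col j M) = g) -> conv_sub M J y -> face_of c g y.
Proof.
move=> hJ [lam [h0 hn h1 hy]]; split; first by exists lam; split => // i; rewrite in_setT.
rewrite hy dot_mulmx (eq_bigr (fun j => lam j 0 * g)).
  by rewrite -big_distrl /= h1 mul1r.
by move=> j _; case: (boolP (j \in J)) => hj; [rewrite hJ | rewrite hn // !mul0r].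
Qed.

End ConvexHull.

Lemma conv_mulmx_stochastic (R : realFieldType) m r n
    (W : 'M[R]_(m, r)) (H : 'M[R]_(r, n)) x :
  (forall i j, 0 <= H i j) -> (forall j, \sum_i H i j = 1) ->
  conv (W *m H) x -> conv W x.
Proof.
move=> hH hs [lam [h0 _ h1 ->]]; exists (H *m lam); split.
- by move=> i; rewrite mxE; apply: sumr_ge0 => j _; apply: mulr_ge0.
- by move=> i; rewrite in_setT.
- rewrite (eq_bigr (fun i => \sum_j H i j * lam j 0)); last by move=> i _; rewrite mxE.
  rewrite exchange_big /= -h1; apply: eq_bigr => j _.
  by rewrite -big_distrl /= hs mul1r.
- by rewrite mulmxA.
Qed.

Section AffineDimension.
Variables (R : realFieldType) (m : nat).
Local Notation V := 'cV[R]_m.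
Implicit Types (S T : V -> Prop) (c x : V) (g : R).

Definition diff_mx k (p : 'I_k.+1 -> V) : 'M[R]_(k, m) :=
  \matrix_(i < k) (p (lift ord0 i) - p ord0)^T.

Definition in_aff k (p : 'I_k.+1 -> V) x := ((x - p ord0)^T <= diff_mx p)%MS.

Lemma diff_mx_mul k (p : 'I_k.+1 -> V) c i :
  (diff_mx p *m c) i 0 = dot c (p (lift ord0 i)) - dot c (p ord0).
Proof.
rewrite -dotBr -trmx_mul_dot mxE [in RHS]mxE; apply: eq_bigr => l _.
by rewrite !mxE.
Qed.

Lemma in_aff_dot k (p : 'I_k.+1 -> V) x c g :
  in_aff p x -> (forall i, dot c (p i) = g) -> dot c x = g.
Proof.
move=> /submxP [z hz] hc.
have h0 : diff_mx p *m c = 0.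
  by apply/matrixP => i j; rewrite (ord1 j) diff_mx_mul !hc subrr mxE.
have : dot c (x - p ord0) = 0 by rewrite -trmx_mul_dot hz -mulmxA h0 mulmx0 mxE.
by rewrite dotBr hc => /eqP; rewrite subr_eq0 => /eqP.
Qed.

Lemma not_in_aff k (p : 'I_k.+1 -> V) x c g :
  (forall i, dot c (p i) = g) -> dot c x < g -> ~ in_aff p x.
Proof. by move=> hc hx /in_aff_dot /(_ hc) hxg; move: hx; rewrite hxg ltxx. Qed.

Definition extend k (p : 'I_k.+1 -> V) x : 'I_k.+2 -> V :=
  fun i => if (i < k.+1)%N then p (inord i) else x.

Section Extend.
Variables (k : nat) (p : 'I_k.+1 -> V) (x : V).

Lemma extend0 : extend p x ord0 = p ord0.
Proof. by rewrite /extend /=; congr p; apply: val_inj; rewrite /= inordK. Qed.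

Lemma extend_lift (i : 'I_k) :
  extend p x (lift ord0 (widen_ord (leqnSn _) i)) = p (lift ord0 i).
Proof.
rewrite /extend /bump /= ltnS ltn_ord.
by congr p; apply: val_inj; rewrite /= inordK // ltnS.
Qed.

Lemma extend_lift_max : extend p x (lift ord0 ord_max) = x.
Proof. by rewrite /extend /bump /= ltnn. Qed.

Lemma extend_widen (i : 'I_k.+1) : extend p x (widen_ord (leqnSn _) i) = p i.
Proof. by rewrite /extend /= ltn_ord; congr p; apply: val_inj; rewrite /= inordK. Qed.

Lemma extend_max : extend p x ord_max = x.
Proof. by rewrite /extend /= ltnn. Qed.

Lemma extend_in S : (forall i, S (p i)) -> S x -> forall i, S (extend p x i).
Proof. by move=> hp hx i; rewrite /extend; case: ifP. Qed.

Lemma aff_indep_extend : aff_indep p -> ~ in_aff p x -> aff_indep (extend p x).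
Proof.
rewrite /aff_indep -/(diff_mx _) -/(diff_mx _) => hf hx; apply: inj_row_free => z.
rewrite mulmx_sum_row big_ord_recr /= rowK extend_lift_max extend0.
under eq_bigr do rewrite rowK extend_lift extend0.
set z' : 'rV[R]_k := \row_i z 0 (widen_ord (leqnSn _) i).
have -> : \sum_(i < k) z 0 (widen_ord (leqnSn k) i) *: (p (lift ord0 i) - p ord0)^T
          = z' *m diff_mx p.
  by rewrite mulmx_sum_row; apply: eq_bigr => i _; rewrite rowK mxE.
move=> hz; have [hl|hl] := eqVneq (z 0 ord_max) 0.
  move: hz; rewrite hl scale0r addr0 => /eqP; rewrite mulmx_free_eq0 // => /eqP hz'.
  apply/rowP => i; rewrite [RHS]mxE.
  have [hi|hi] := ltnP i k.
    have -> : i = widen_ord (leqnSn k) (Ordinal hi) by apply: val_inj.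
    by have := congr1 (fun w : 'rV[R]_k => w 0 (Ordinal hi)) hz'; rewrite !mxE.
  have -> : i = ord_max by apply: val_inj => /=; apply/eqP; rewrite eqn_leq hi -ltnS ltn_ord.
  by rewrite hl.
(* z_max != 0: dividing by it puts (x - p 0)^T in the row space of diff_mx p *)
exfalso; apply: hx; apply/submxP; exists (- (z 0 ord_max)^-1 *: z').
have hv : z 0 ord_max *: (x - p ord0)^T = - (z' *m diff_mx p).
  by apply/eqP; rewrite -addr_eq0 addrC hz.
rewrite -[(x - p ord0)^T]scale1r -(mulVf hl) -scalerA hv.
by rewrite scaleNr mulNmx -scalemxAl scalerN.
Qed.

End Extend.

Lemma exists_dot_separating k (p : 'I_k.+1 -> V) v : aff_indep (extend p v) ->
  exists c g, (forall i, dot c (p i) = g) /\ dot c v = g + 1.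
Proof.
move=> hP; have /row_freeP [B hB] : row_free (diff_mx (extend p v)) := hP.
pose c := B *m delta_mx (@ord_max k) (0 : 'I_1).
have hc i : dot c (extend p v (lift ord0 i)) - dot c (p ord0) = (i == ord_max)%:R.
  by rewrite -(extend0 p v) -diff_mx_mul /c mulmxA hB mul1mx mxE eqxx andbT.
exists c, (dot c (p ord0)); split.
  move=> i; case: (unliftP ord0 i) => [i'|] -> //.
  have := hc (widen_ord (leqnSn _) i'); rewrite extend_lift.
  have -> : (widen_ord (leqnSn k) i' == ord_max) = false.
    by apply/negbTE; rewrite -val_eqE /= neq_ltn ltn_ord.
  by move/eqP; rewrite subr_eq0 => /eqP.
have := hc ord_max; rewrite extend_lift_max eqxx.
by move/eqP; rewrite subr_eq addrC => /eqP.
Qed.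

Lemma in_aff_dim_bound j k (q : 'I_j.+1 -> V) (p : 'I_k.+1 -> V) :
  (forall i, in_aff p (q i)) -> aff_indep q -> (j <= k)%N.
Proof.
move=> hq; rewrite /aff_indep /row_free -/(diff_mx _) => /eqP hr.
have hs : (diff_mx q <= diff_mx p)%MS.
  apply/row_subP => i; rewrite rowK.
  have -> : q (lift ord0 i) - q ord0 = (q (lift ord0 i) - p ord0) - (q ord0 - p ord0).
    by rewrite opprB addrA subrK.
  rewrite linearB /=; apply: addmx_sub; first exact: hq.
  by rewrite -scaleN1r; apply: scalemx_sub; exact: hq.
by have := mxrankS hs; rewrite hr => /leq_trans; apply; apply: rank_leq_row.
Qed.

Lemma in_aff_maximal S k (p : 'I_k.+1 -> V) x :
  aff_indep p -> (forall i, S (p i)) -> ~ aff_dim_ge S k.+1 -> S x -> in_aff p x.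
Proof.
move=> hp hS hn hx; apply: NNPP => hnx; apply: hn.
by exists (extend p x); split; [exact: extend_in | exact: aff_indep_extend].
Qed.

Lemma exists_not_in_aff S k (p : 'I_k.+1 -> V) :
  aff_dim_ge S k.+1 -> aff_indep p -> exists x, S x /\ ~ in_aff p x.
Proof.
case=> q [hqS hq] hp; apply: NNPP => hn.
have hall i : in_aff p (q i) by apply: NNPP => hni; apply: hn; exists (q i).
by have := in_aff_dim_bound hall hq; rewrite ltnn.
Qed.

Lemma aff_dim_ge_sub S T k :
  (forall x, S x -> T x) -> aff_dim_ge S k -> aff_dim_ge T k.
Proof. by move=> h [p [hp hi]]; exists p; split => // i; apply: h. Qed.

Lemma aff_dim_ge0 S x : S x -> aff_dim_ge S 0.
Proof.
move=> hx; exists (fun _ => x); split => //.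
by apply: inj_row_free => v _; apply/rowP => -[].
Qed.

Lemma aff_dim_ge_point S k : aff_dim_ge S k -> exists x, S x.
Proof. by case=> p [hp _]; exists (p ord0). Qed.

Lemma aff_dim_geS S k : aff_dim_ge S k.+1 -> aff_dim_ge S k.
Proof.
case=> p [hp hi]; exists (fun i => p (widen_ord (leqnSn _) i)); split => //.
apply: inj_row_free => z hz; move: hi; rewrite /aff_indep -/(diff_mx _) => hi.
pose z0 : 'rV[R]_k.+1 := \row_i (if insub (i : nat) is Some j then z 0 j else 0).
have hw (i : 'I_k) : z0 0 (widen_ord (leqnSn _) i) = z 0 i by rewrite mxE /= (valK i).
have : z0 *m diff_mx p = 0.
  rewrite mulmx_sum_row big_ord_recr /= mxE insubN ?ltnn // scale0r addr0.
  rewrite -[RHS]hz mulmx_sum_row; apply: eq_bigr => i _.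
  rewrite !rowK hw; congr (_ *: _).
  by congr (_ - _)^T; congr p; apply: val_inj.
move/eqP; rewrite mulmx_free_eq0 // => /eqP h0.
apply/rowP => i; have := congr1 (fun w : 'rV[R]_k.+1 => w 0 (widen_ord (leqnSn _) i)) h0.
by rewrite hw !mxE.
Qed.

Lemma aff_dim_ge_leq S i j : (i <= j)%N -> aff_dim_ge S j -> aff_dim_ge S i.
Proof.
move=> hij h; elim: j hij h => [|j ih]; first by rewrite leqn0 => /eqP ->.
by rewrite leq_eqVlt ltnS => /orP [/eqP -> //|hij] /aff_dim_geS; apply: ih.
Qed.

Lemma aff_dim_ge_bound S k : aff_dim_ge S k -> (k <= m)%N.
Proof. by case=> p [_]; rewrite /aff_indep /row_free => /eqP <-; apply: rank_leq_col. Qed.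

Lemma has_dim_exists S x : S x -> exists t : nat, has_dim S t.
Proof.
move=> hx; suff h u : ~ aff_dim_ge S u -> exists t : nat, has_dim S t.
  by apply: (h m.+1) => /aff_dim_ge_bound; rewrite ltnn.
elim: u => [/(_ (aff_dim_ge0 hx)) //|u ih hu].
by have [hu'|/ih //] := classic (aff_dim_ge S u); exists u.
Qed.

Lemma has_dim_max S (t u : nat) : has_dim S t -> aff_dim_ge S u -> (u <= t)%N.
Proof.
by case=> _ ht hu; rewrite leqNgt; apply/negP => hlt; apply/ht/(aff_dim_ge_leq hlt).
Qed.

Lemma has_dim_uniq S d1 d2 : has_dim S d1 -> has_dim S d2 -> d1 = d2.
Proof.
case: d1 => [t1|[|n1]] //; case: d2 => [t2|[|n2]] //.
- move=> h1 h2; congr Posz; apply/eqP; rewrite eqn_leq.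
  by rewrite (has_dim_max h2 h1.1) (has_dim_max h1 h2.1).
- by move=> [/aff_dim_ge_point [x hx] _] /(_ x).
- by move=> h1 [/aff_dim_ge_point [x hx] _]; case: (h1 x).
Qed.

Lemma has_dim_ext S T d : (forall x, S x <-> T x) -> has_dim S d -> has_dim T d.
Proof.
move=> h; case: d => [t|[|n]] //=.
- move=> [h1 h2]; split; first by apply: aff_dim_ge_sub h1 => x /h.
  by move=> h3; apply: h2; apply: aff_dim_ge_sub h3 => x /h.
- by move=> h1 x /h /h1.
Qed.

Lemma in_aff_coef k (p : 'I_k.+1 -> V) x : in_aff p x ->
  exists z : 'rV[R]_k, forall c,
    dot c x - dot c (p ord0) = \sum_i z 0 i * (dot c (p (lift ord0 i)) - dot c (p ord0)).
Proof.
move=> /submxP [z hz]; exists z => c.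
rewrite -dotBr -trmx_mul_dot hz -mulmxA mxE; apply: eq_bigr => i _.
by rewrite diff_mx_mul.
Qed.

(* The affine core of the fact that a face of codimension 2 of a polytope lies in
   at most two facets. *)
Lemma three_hyperplanes S k (p : 'I_k.+1 -> V) a1 b1 a2 b2 a3 b3 x1 x2 x3 :
  ~ aff_dim_ge S k.+3 -> aff_indep p -> (forall i, S (p i)) ->
  S x1 -> S x2 -> S x3 ->
  (forall i, dot a1 (p i) = b1) -> (forall i, dot a2 (p i) = b2) ->
  (forall i, dot a3 (p i) = b3) ->
  [/\ dot a1 x1 = b1, dot a2 x1 < b2 & dot a3 x1 < b3] ->
  [/\ dot a1 x2 < b1, dot a2 x2 = b2 & dot a3 x2 < b3] ->
  ~ [/\ dot a1 x3 < b1, dot a2 x3 < b2 & dot a3 x3 = b3].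
Proof.
move=> hS hp hpS h1 h2 h3 hp1 hp2 hp3 [h11 h21 h31] [h12 h22 h32] [h13 h23 h33].
pose P := extend (extend p x1) x2.
have hP : aff_indep P.
  apply: aff_indep_extend; first exact: aff_indep_extend hp (not_in_aff hp2 h21).
  by apply: (not_in_aff (c := a1)) h12; apply: (extend_in (S := fun y => dot a1 y = b1)).
have /in_aff_coef [z hz] : in_aff P x3.
  by apply: (in_aff_maximal hP _ hS h3); do 2 apply: extend_in => //.
set z1 := z 0 (widen_ord (leqnSn _) ord_max); set z2 := z 0 ord_max.
have hcoef c beta : (forall i, dot c (p i) = beta) ->
    dot c x3 - beta = z1 * (dot c x1 - beta) + z2 * (dot c x2 - beta).
  move=> hc; have := hz c; rewrite /P !extend0 hc => ->.
  rewrite big_ord_recr /= extend_lift_max big_ord_recr /= extend_lift extend_lift_max.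
  by rewrite big1 ?add0r // => i _; rewrite !extend_lift hc subrr mulr0.
have := hcoef _ _ hp1; rewrite h11 subrr mulr0 add0r => e1.
have := hcoef _ _ hp2; rewrite h22 subrr mulr0 addr0 => e2.
have := hcoef _ _ hp3; rewrite h33 subrr => e3.
have hz2 : 0 < z2 by have := h13; rewrite -subr_lt0 e1 nmulr_llt0 // subr_lt0.
have hz1 : 0 < z1 by have := h23; rewrite -subr_lt0 e2 nmulr_llt0 // subr_lt0.
have : dot a3 x1 - b3 < 0 /\ dot a3 x2 - b3 < 0 by rewrite !subr_lt0.
case=> hs1 hs2; nra.
Qed.

End AffineDimension.

Lemma intS_sub1 (t : nat) : t.+1%:Z - 1 = t.
Proof. by rewrite -addn1 PoszD addrK. Qed.

Section Polytopes.
Variables (R : realFieldType) (m N : nat) (M : 'M[R]_(m, N)).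
Local Notation V := 'cV[R]_m.
Implicit Types (F G : V -> Prop) (a c q x y : V) (b g : R).

Lemma face_conv F x : is_face M F -> F x -> conv M x.
Proof. by case=> a [b [_ hF]] /hF []. Qed.

Lemma is_facet_ext F G : (forall x, F x <-> G x) -> is_facet M F -> is_facet M G.
Proof.
move=> hFG [[a [b [hv hF]]] [d [hd hFd]]]; split.
  by exists a, b; split => // x; rewrite -hF; split => /hFG.
by exists d; split => //; apply: has_dim_ext hFd.
Qed.

Lemma is_facetI F (t : nat) :
  is_face M F -> has_dim (conv M) t.+1 -> has_dim F t -> is_facet M F.
Proof. by move=> hF hM ht; split => //; exists t.+1; rewrite intS_sub1. Qed.

Lemma facet_has_dim F d : is_facet M F -> has_dim (conv M) d -> has_dim F (d - 1).
Proof. by case=> _ [d' [hd' hF]] hd; rewrite (has_dim_uniq hd hd'). Qed.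

Lemma is_facet_dim F x : is_facet M F -> F x ->
  exists t : nat, has_dim (conv M) t.+1 /\ has_dim F t.
Proof.
case=> _ [[[|t]|n] [hM hF]] hx.
- by case: (hF x).
- by exists t; split => //; rewrite -intS_sub1.
- by case: hF.
Qed.

Lemma facet_dim_conv F (t : nat) : is_facet M F -> has_dim F t -> has_dim (conv M) t.+1.
Proof.
move=> hF ht; have [x hx] := aff_dim_ge_point ht.1.
have [t' [hM ht']] := is_facet_dim hF hx.
by case: (has_dim_uniq ht ht') => ->.
Qed.

Lemma facet_sub_facet F G : is_facet M F -> is_facet M G ->
  (forall x, G x -> F x) -> forall x, F x -> G x.
Proof.
move=> hF hG hGF x hx.
have [t [hM _]] := is_facet_dim hF hx.
have [[p [hpG hp]] _] := facet_has_dim hG hM.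
have [_ hFmax] := facet_has_dim hF hM.
have [a [b [_ hGab]]] := face_repr hG.1.
have hxp : in_aff p x by apply: (in_aff_maximal hp _ hFmax hx) => i; apply/hGF/hpG.
apply/hGab; split; first exact: face_conv hF.1 hx.
by apply: (in_aff_dot hxp) => i; have [] := (hGab (p i)).1 (hpG i).
Qed.

Lemma conv_dim_le_rank (e : nat) : aff_dim_ge (conv M) e -> (e <= \rank M)%N.
Proof.
case=> p [hp]; rewrite /aff_indep /row_free => /eqP <-.
rewrite -(mxrank_tr M); apply: mxrankS; apply/row_subP => i; rewrite rowK.
case: (hp (lift ord0 i)) => l1 [_ _ _ ->]; case: (hp ord0) => l0 [_ _ _ ->].
by rewrite -mulmxBr trmx_mul submxMl.
Qed.

Lemma proper_face_dim a b q (e t : nat) :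
  valid M a b -> conv M q -> dot a q < b ->
  has_dim (conv M) e -> aff_dim_ge (face_of M a b) t -> (t < e)%N.
Proof.
move=> hv hq hqb [_ he] [p [hp hpi]]; rewrite ltnNge; apply/negP => het.
have hn : ~ aff_dim_ge (conv M) t.+1 by move=> h; apply/he/(aff_dim_ge_leq _ h).
have /in_aff_dot hqa := in_aff_maximal hpi (fun i => (hp i).1) hn hq.
by move: hqb; rewrite (hqa a b (fun i => (hp i).2)) ltxx.
Qed.

Lemma larger_face_dim_ge a b c g (t : nat) y :
  (forall x, face_of M a b x -> face_of M c g x) -> aff_dim_ge (face_of M a b) t ->
  face_of M c g y -> dot a y < b -> aff_dim_ge (face_of M c g) t.+1.
Proof.
move=> hsub [p [hp hpi]] hy hya; exists (extend p y); split.
  by apply: extend_in => // i; apply/hsub.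
by apply: aff_indep_extend hpi _; apply: (not_in_aff (c := a)) hya => i; case: (hp i).
Qed.

Lemma larger_face_has_dim a b c g (k : nat) y z :
  has_dim (conv M) k.+2 -> (forall x, face_of M a b x -> face_of M c g x) ->
  aff_dim_ge (face_of M a b) k -> face_of M c g y -> dot a y < b ->
  valid M c g -> conv M z -> dot c z < g -> has_dim (face_of M c g) k.+1.
Proof.
move=> hM hsub hk hy hya hv hz hzg; split; first exact: larger_face_dim_ge hya.
by move/(proper_face_dim hv hz hzg hM); rewrite ltnn.
Qed.

(* No tilt [c + r a] of [c] is constant on conv M, so rotating [a x = b] about
   its face in the direction [c] meets new columns on both sides. *)
Lemma tilt_direction a b q (t : nat) :
  valid M a b -> conv M q -> dot a q < b -> has_dim (face_of M a b) t ->
  aff_dim_ge (conv M) t.+2 ->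
  exists c g, (forall j, dot a (col j M) = b -> dot c (col j M) = g) /\
              forall r k, ~ forall j, dot (c + r *: a) (col j M) = k.
Proof.
move=> hv hq hqb [[p [hp hpi]] hn] hM.
have hpa i : dot a (p i) = b by case: (hp i).
have hpq : aff_indep (extend p q) by apply: aff_indep_extend hpi (not_in_aff hpa hqb).
have [v [hv' hnv]] := exists_not_in_aff hM hpq.
have [c [g [hcpq hcv]]] := exists_dot_separating (aff_indep_extend hpq hnv).
have hcp i : dot c (p i) = g by rewrite -(extend_widen p q) hcpq.
have hcq : dot c q = g by rewrite -(extend_max p q) hcpq.
exists c, g; split.
  move=> j hj; apply: (in_aff_dot _ hcp).
  by apply: (in_aff_maximal hpi hp hn); split => //; apply: conv_col.
move=> r k hall; have hk := conv_dot_const hall.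
have h0 := hk _ (hp ord0).1; rewrite dotDl dotZl hcp hpa in h0.
have h1 := hk _ hq; rewrite dotDl dotZl hcq in h1.
have h2 := hk _ hv'; rewrite dotDl dotZl hcv in h2.
have /eqP : r * (b - dot a q) = 0 by lra.
rewrite mulf_eq0 subr_eq0 => /orP [/eqP hr0|/eqP hb]; last by move: hqb; rewrite hb ltxx.
by move: h0 h2; rewrite hr0 !mul0r !addr0 => ->; lra.
Qed.

End Polytopes.

Section Wrapping.
Variables (R : realFieldType) (m N : nat) (M : 'M[R]_(m, N)).
Local Notation V := 'cV[R]_m.
Implicit Types (a c q x y : V) (b g : R).

Lemma valid_tilt a b c g r : valid M a b ->
  (forall j, dot a (col j M) = b -> dot c (col j M) = g) ->
  (forall j, dot a (col j M) < b -> dot c (col j M) - g <= r * (b - dot a (col j M))) ->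
  valid M (c + r *: a) (g + r * b).
Proof.
move=> hv htc hr j; rewrite dotDl dotZl.
have [/eqP ht|hs] := boolP (dot a (col j M) == b); first by rewrite ht (htc _ ht).
by have := hr j; rewrite lt_neqAle hs hv => /(_ isT); lra.
Qed.

(* Rotate the hyperplane [a x = b] about its face, in the direction [c], both
   ways until it meets a new column: the extreme values of the slope
   [(c x - g) / (b - a x)] over the columns below the hyperplane. *)
Lemma rotate_face a b c g q :
  valid M a b -> conv M q -> dot a q < b ->
  (forall j, dot a (col j M) = b -> dot c (col j M) = g) ->
  (forall r k, ~ forall j, dot (c + r *: a) (col j M) = k) ->
  exists c1 g1 c2 g2 j1 j2,
  [/\ valid M c1 g1 /\ valid M c2 g2,
      (forall j, dot a (col j M) = b -> dot c1 (col j M) = g1 /\ dot c2 (col j M) = g2),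
      [/\ dot a (col j1 M) < b, dot c1 (col j1 M) = g1 & dot c2 (col j1 M) < g2],
      [/\ dot a (col j2 M) < b, dot c2 (col j2 M) = g2 & dot c1 (col j2 M) < g1]
    & forall y, dot a y < b -> dot c1 y <> g1 \/ dot c2 y <> g2].
Proof.
move=> hv hq hqb htc hnc; have [j0 hj0] := exists_col_lt hv hq hqb.
pose slack j := dot a (col j M) < b.
pose slope j := (dot c (col j M) - g) / (b - dot a (col j M)).
have hslope j : slack j -> dot c (col j M) - g = slope j * (b - dot a (col j M)).
  by move=> hj; rewrite /slope divfK // subr_eq0 gt_eqF.
have [j1 hj1 hmax] := @arg_maxP _ _ _ j0 slack slope hj0.
have [j2 hj2 hmin] := @arg_minP _ _ _ j0 slack slope hj0.
set r1 := slope j1 in hmax *; set r2 := slope j2 in hmin *.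
have {}hmax j : slack j -> slope j <= r1 by move/hmax.
have {}hmin j : slack j -> r2 <= slope j by move/hmin.
have hmul j : slack j -> r2 * (b - dot a (col j M)) <= slope j * (b - dot a (col j M))
    <= r1 * (b - dot a (col j M)).
  by move=> hj; rewrite !ler_pM2r ?subr_gt0 // hmax ?hmin.
have hlt : r2 < r1.
  rewrite lt_neqAle hmin // andbT; apply/eqP => he.
  apply: (hnc r1 (g + r1 * b)) => j; rewrite dotDl dotZl.
  have [/eqP ht|hs] := boolP (dot a (col j M) == b); first by rewrite ht (htc _ ht).
  have {}hs : slack j by rewrite /slack lt_neqAle hs hv.
  by have := hslope j hs; have /andP := hmul j hs; rewrite -he; lra.
have hlt_mul j : slack j -> r2 * (b - dot a (col j M)) < r1 * (b - dot a (col j M)).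
  by move=> hj; rewrite ltr_pM2r ?subr_gt0.
have hc1 y : dot (c + r1 *: a) y = dot c y + r1 * dot a y by rewrite dotDl dotZl.
have hc2 y : dot (- c + - r2 *: a) y = - (dot c y + r2 * dot a y).
  by rewrite dotDl dotNl dotZl mulNr opprD.
exists (c + r1 *: a), (g + r1 * b), (- c + - r2 *: a), (- g + - r2 * b), j1, j2.
split; first split.
- by apply: valid_tilt hv htc _ => j hj; have /andP [_] := hmul j hj; rewrite -hslope.
- apply: (valid_tilt (c := - c) (g := - g) hv) => [j /htc|j hj]; first by rewrite dotNl => ->.
  by have /andP [+ _] := hmul j hj; rewrite -hslope // dotNl mulNr; lra.
- by move=> j ht; rewrite hc1 hc2 ht (htc _ ht); split => //; lra.
- rewrite hc1 hc2; have := hslope _ hj1; rewrite -/r1.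
  by have := hlt_mul _ hj1; split => //; lra.
- rewrite hc1 hc2; have := hslope _ hj2; rewrite -/r2.
  by have := hlt_mul _ hj2; split => //; lra.
- move=> y hy; apply: NNPP => /not_or_and [/NNPP h1 /NNPP h2].
  move: h1 h2; rewrite hc1 hc2 => h1 h2.
  have : (r1 - r2) * (b - dot a y) = 0 by lra.
  by move/eqP; rewrite mulf_eq0 subr_eq0 (gt_eqF hlt) subr_eq0 (gt_eqF hy).
Qed.

Lemma facet_through_face (e : nat) a b q :
  has_dim (conv M) e -> valid M a b -> (exists x, face_of M a b x) ->
  conv M q -> dot a q < b ->
  exists c g, [/\ valid M c g, forall x, face_of M a b x -> face_of M c g x,
                  dot c q < g & is_facet M (face_of M c g)].
Proof.
move=> he hv [x0 /has_dim_exists [t ht]] hq.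
have hn : (e <= e + t)%N by apply: leq_addr.
(* induction on an upper bound n for the codimension e - t of the face *)
move: {2}e hn => n; elim: n a b t ht hv => [|n ih] a b t ht hv hn hqb.
  by have := proper_face_dim hv hq hqb he ht.1; rewrite ltnNge hn.
have hte := proper_face_dim hv hq hqb he ht.1.
have [het|hne] := eqVneq e t.+1.
  exists a, b; split => //; apply: is_facetI (valid_face hv) _ ht.
  by rewrite -het.
have hM : aff_dim_ge (conv M) t.+2.
  by apply: aff_dim_ge_leq he.1; rewrite ltn_neqAle eq_sym hne.
have [c [g [htc hnc]]] := tilt_direction hv hq hqb ht hM.
have [c1 [g1 [c2 [g2 [j1 [j2 [[hv1 hv2] ht12 [h1a h1 _] [h2a h2 _] hsep]]]]]]] :=
  rotate_face hv hq hqb htc hnc.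
have grow c' g' j : valid M c' g' ->
    (forall j, dot a (col j M) = b -> dot c' (col j M) = g') ->
    dot c' (col j M) = g' -> dot a (col j M) < b -> dot c' q <> g' ->
    exists c g, [/\ valid M c g, forall x, face_of M a b x -> face_of M c g x,
                    dot c q < g & is_facet M (face_of M c g)].
  move=> hv' ht' hj hja hq'; have hsub := face_of_sub hv ht'.
  have hjF : face_of M c' g' (col j M) by split => //; apply: conv_col.
  have [t' ht''] := has_dim_exists hjF.
  have htt' := has_dim_max ht'' (larger_face_dim_ge hsub ht.1 hjF hja).
  have [||c'' [g'' [hv'' hsub' hq'' hF]]] := ih c' g' t' ht'' hv'.
  - by rewrite (leq_trans hn) // addSnnS leq_add2l.
  - by apply: face_of_lt hq _ => -[].
  by exists c'', g''; split => // x /hsub /hsub'.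
case: (hsep q hqb) => hq'.
  by apply: (grow c1 g1 j1) => // j /ht12 [].
by apply: (grow c2 g2 j2) => // j /ht12 [].
Qed.

Lemma exists_nonconst_dot : aff_dim_ge (conv M) 1 ->
  exists c, forall k, ~ forall j, dot c (col j M) = k.
Proof.
case=> p [hp hi]; exists (p (lift ord0 ord0) - p ord0) => k hall.
set c := p (lift ord0 ord0) - p ord0 in hall.
have : dot c c = 0.
  by rewrite /c dotBr (conv_dot_const hall (hp _)) (conv_dot_const hall (hp _)) subrr.
rewrite dotE => /eqP; rewrite psumr_eq0 => [/allP hz|i _]; last by rewrite -expr2 sqr_ge0.
have hc0 j : c j 0 = 0.
  by have /implyP /(_ isT) := hz j (mem_index_enum j); rewrite mulf_eq0 orbb => /eqP.
move: hi; rewrite /aff_indep -/(diff_mx p).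
have -> : diff_mx p = 0.
  by apply/matrixP => i j; have := hc0 j; rewrite (ord1 i) !mxE.
by rewrite /row_free mxrank0.
Qed.

Lemma facet_avoiding (e : nat) q : has_dim (conv M) e.+1 -> conv M q ->
  exists c g, [/\ valid M c g, dot c q < g & is_facet M (face_of M c g)].
Proof.
move=> he hq; have [c hc] := exists_nonconst_dot (aff_dim_ge_leq (isT : (1 <= e.+1)%N) he.1).
(* rotate the empty face of [0 x <= 1] in the direction of c *)
have hv0 : valid M 0 1 by move=> j; rewrite dot0l ler01.
have hq0 : dot 0 q < 1 by rewrite dot0l ltr01.
have [||c1 [g1 [c2 [g2 [j1 [j2 [[hv1 hv2] _ [_ h1 _] [_ h2 _] hsep]]]]]]] :=
  @rotate_face 0 1 c 0 q hv0 hq hq0.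
- by move=> j; rewrite dot0l => /eqP; rewrite eq_sym oner_eq0.
- by move=> r k; rewrite scaler0 addr0; apply: hc.
have avoid c' g' j : valid M c' g' -> dot c' (col j M) = g' -> dot c' q <> g' ->
    exists c g, [/\ valid M c g, dot c q < g & is_facet M (face_of M c g)].
  move=> hv' hj hq'; have hjF : face_of M c' g' (col j M) by split => //; apply: conv_col.
  have [|c'' [g'' [hv'' _ hq'' hF]]] := facet_through_face he hv' (ex_intro _ _ hjF) hq.
    by apply: face_of_lt hq _ => -[].
  by exists c'', g''.
by case: (hsep q hq0) => hq'; [apply: (avoid c1 g1 j1) | apply: (avoid c2 g2 j2)].
Qed.

End Wrapping.

Section FacetBasedConditions.
Variables (R : realFieldType) (m n r s : nat).
Variables (X : 'M[R]_(m, n)) (W : 'M[R]_(m, r)) (H : 'M[R]_(r, n)).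
Hypotheses (XWH : X = W *m H) (fbc : FBC X W H s).
Local Notation V := 'cV[R]_m.
Implicit Types (F G : V -> Prop) (a c q x : V) (b g : R).

Lemma conv_X_sub_W x : conv X x -> conv W x.
Proof. by case: fbc => _ [hH hs] _ _; rewrite XWH; apply: conv_mulmx_stochastic. Qed.

Lemma valid_X_of_W a b : valid W a b -> valid X a b.
Proof. by move=> hv j; apply/(valid_conv hv)/conv_X_sub_W/conv_col. Qed.

Lemma face_X_sub_W a b x : face_of X a b x -> face_of W a b x.
Proof. by case=> /conv_X_sub_W. Qed.

Lemma facet_W_cols F : is_facet W F -> exists J : {set 'I_n},
  [/\ distinct_cols_in X J F, (s <= #|J|)%N, (2 <= \rank X)%N
    & aff_dim_ge (conv_sub X J) (\rank X - 2)].
Proof.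
move=> hF; case: fbc => _ _ [hds /(_ F hF) [J [hsJ hJF hdJ]]] _; exists J.
move: hds hdJ; case: (\rank X) => [|[|k]] hds hdJ //.
  have /card_gt0P [j hj] : (0 < #|J|)%N by apply: leq_trans hsJ.
  by case: (hdJ _ (conv_sub_col X hj)).
move: hdJ; have -> : k.+2%:Z - 2 = k by rewrite -addn2 PoszD addrK.
by case=> hk _; split; rewrite ?subn2.
Qed.

Lemma facet_W_of_facet_X F G : is_facet W F ->
  (forall x, conv X x -> F x -> G x) -> is_facet X G -> is_facet W G.
Proof.
move=> hF hFG hG; have [J [[hinj hJF] hsJ _ _]] := facet_W_cols hF.
apply: NNPP => hn; case: fbc => _ _ _ /(_ G hG hn J) hlt.
have : (#|J| < s)%N by apply: hlt; split => // j hj; apply: hFG (conv_col X j) (hJF j hj).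
by rewrite ltnNge hsJ.
Qed.

Lemma face_X_dim a b : is_facet W (face_of W a b) ->
  (2 <= \rank X)%N /\ aff_dim_ge (face_of X a b) (\rank X - 2).
Proof.
move=> hF; have [J [[_ hJF] _ h2 hJ]] := facet_W_cols hF; split => //.
by apply: aff_dim_ge_sub hJ => y; apply: conv_sub_face => j /hJF [].
Qed.

Lemma conv_X_not_in_facet_W a b : valid W a b -> is_facet W (face_of W a b) ->
  exists2 q, conv X q & dot a q < b.
Proof.
move=> hv hF; apply: NNPP => hn.
have hXF x : conv X x -> face_of W a b x.
  move=> hx; split; first exact: conv_X_sub_W.
  apply/eqP; rewrite eq_le (valid_conv hv (conv_X_sub_W hx)) /= leNgt.
  by apply/negP => h; apply: hn; exists x.
have [_ /aff_dim_ge_point [q0 [hq0 _]]] := face_X_dim hF.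
have [D [hWD hFD]] := is_facet_dim hF (hXF _ hq0).
have [c [g [hvc hcq hF']]] := facet_avoiding hWD (conv_X_sub_W hq0).
have [_ /aff_dim_ge_point [y hy]] := face_X_dim hF'.
have [e he] := has_dim_exists hq0.
have [c' [g' [_ hsub _ hG]]] :=
  facet_through_face he (valid_X_of_W hvc) (ex_intro _ y hy) hq0 hcq.
have hGW := facet_W_of_facet_X hF' (fun x hx hFx => hsub x (conj hx hFx.2)) hG.
have [t [hXt hGt]] := is_facet_dim hG (hsub _ hy).
case: (has_dim_uniq hWD (facet_dim_conv hGW hGt)) => htD; subst t.
by have := has_dim_max hFD (aff_dim_ge_sub hXF hXt.1); rewrite ltnn.
Qed.

Lemma rotated_facet_W a b c g (k : nat) j j' :
  is_facet W (face_of W a b) -> has_dim (conv X) k.+2 ->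
  aff_dim_ge (face_of X a b) k -> valid X c g ->
  (forall x, face_of X a b x -> face_of X c g x) ->
  face_of X c g (col j X) -> dot a (col j X) < b -> dot c (col j' X) < g ->
  has_dim (conv W) k.+2 /\
  exists a' b', valid W a' b' /\ forall x, face_of X c g x <-> face_of W a' b' x.
Proof.
move=> hF hXk hG hv hsub hj hja hj'.
have hdim := larger_face_has_dim hXk hsub hG hj hja hv (conv_col X j') hj'.
have hfX := is_facetI (valid_face hv) hXk hdim.
have hfW := facet_W_of_facet_X hF (fun x hx hFx => hsub x (conj hx hFx.2)) hfX.
by split; [apply: facet_dim_conv hfW hdim | apply: face_repr hfW.1].
Qed.

Lemma face_X_not_codim2 a b q (k : nat) :
  valid W a b -> is_facet W (face_of W a b) -> conv X q -> dot a q < b ->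
  has_dim (conv X) k.+2 -> ~ has_dim (face_of X a b) k.
Proof.
move=> hv hF hq hqb hXk hG; have hvX := valid_X_of_W hv.
have [c [g [htc hnc]]] := tilt_direction hvX hq hqb hG hXk.1.
have [c1 [g1 [c2 [g2 [j1 [j2 [[hv1 hv2] ht [h1a h11 h21] [h2a h22 h12] _]]]]]]] :=
  rotate_face hvX hq hqb htc hnc.
have hsub1 := face_of_sub hvX (fun j h => (ht j h).1).
have hsub2 := face_of_sub hvX (fun j h => (ht j h).2).
have hx1 : face_of X c1 g1 (col j1 X) by split => //; apply: conv_col.
have hx2 : face_of X c2 g2 (col j2 X) by split => //; apply: conv_col.
have [hWk [a1 [b1 [hva1 hF1]]]] := rotated_facet_W hF hXk hG.1 hv1 hsub1 hx1 h1a h12.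
have [_ [a2 [b2 [hva2 hF2]]]] := rotated_facet_W hF hXk hG.1 hv2 hsub2 hx2 h2a h21.
have [[p [hpG hp]] hGmax] := hG.
have [f [hfF hfp]] : exists f, face_of W a b f /\ ~ in_aff p f.
  by apply: exists_not_in_aff hp; case: (facet_has_dim hF hWk).
have below a' b' c' g' y : valid W a' b' ->
    (forall x, face_of X c' g' x <-> face_of W a' b' x) ->
    conv W y -> ~ face_of X c' g' y -> dot a' y < b'.
  by move=> hva hF' hy hn; apply: face_of_lt hva hy (fun h => hn ((hF' y).2 h)).
have hfX c' g' : ~ face_of X c' g' f.
  by move=> [hfc _]; apply/hfp/(in_aff_maximal hp hpG hGmax); split => //; case: hfF.
have hxW j : conv W (col j X) by apply/conv_X_sub_W/conv_col.
apply: (three_hyperplanes (a1 := a1) (b1 := b1) (a2 := a2) (b2 := b2) (a3 := a) (b3 := b)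
  hWk.2 hp (fun i => (face_X_sub_W (hpG i)).1) (hxW j1) (hxW j2) hfF.1).
- by move=> i; case: ((hF1 (p i)).1 (hsub1 _ (hpG i))).
- by move=> i; case: ((hF2 (p i)).1 (hsub2 _ (hpG i))).
- by move=> i; case: (hpG i).
- split => //; first by case: ((hF1 _).1 hx1).
  by apply: below hva2 hF2 (hxW j1) _ => -[_ h]; move: h21; rewrite h ltxx.
- split => //; last by case: ((hF2 _).1 hx2).
  by apply: below hva1 hF1 (hxW j2) _ => -[_ h]; move: h12; rewrite h ltxx.
- split; last by case: hfF.
  + exact: below hva1 hF1 hfF.1 (hfX _ _).
  + exact: below hva2 hF2 hfF.1 (hfX _ _).
Qed.

Lemma face_X_facet a b : valid W a b -> is_facet W (face_of W a b) ->
  is_facet X (face_of X a b).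
Proof.
move=> hv hF; have hvX := valid_X_of_W hv.
have [q hq hqb] := conv_X_not_in_facet_W hv hF.
have [h2 hGk] := face_X_dim hF.
have [y /has_dim_exists [g hg]] := aff_dim_ge_point hGk.
have [e he] := has_dim_exists hq.
have hkg := has_dim_max hg hGk.
have hge := proper_face_dim hvX hq hqb he hg.1.
have her := conv_dim_le_rank he.1.
have [heg|hne] := eqVneq e g.+1.
  by apply: is_facetI (valid_face hvX) _ hg; rewrite -heg.
have hgk : g = (\rank X - 2)%N by lia.
have hek : e = (\rank X - 2).+2 by lia.
by subst g e; case: (face_X_not_codim2 hv hF hq hqb he hg).
Qed.

End FacetBasedConditions.

Unset Implicit Arguments.

Theorem lemma1 (R : realFieldType) (m n r : nat)
    (X : 'M[R]_(m, n)) (W : 'M[R]_(m, r)) (H : 'M[R]_(r, n)) (s : nat) :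
  (forall i j, 0 <= X i j) ->
  (forall i j, 0 <= H i j) ->
  X = W *m H ->
  FBC X W H s ->
  forall F : 'cV[R]_m -> Prop, is_facet W F -> is_facet X F.
Proof.
move=> _ _ XWH fbc F hF.
have [a [b [hv hFab]]] := face_repr hF.1.
have hFW : is_facet W (face_of W a b) := is_facet_ext hFab hF.
have hGX := face_X_facet XWH fbc hv hFW.
have hGW : is_facet W (face_of X a b).
  by apply: (facet_W_of_facet_X fbc hFW) hGX => x hx [].
have hWG := facet_sub_facet hFW hGW (fun x hx => face_X_sub_W XWH fbc hx).
apply: is_facet_ext hGX => x; rewrite hFab.
by split=> [/(face_X_sub_W XWH fbc)|/hWG].
Qed.
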